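(* Let $k,m,n,r$ be integers with $n\ge 3$, $2\le m\le n$, $0\le r\le n-1$ and $1\le k\le\left\lfloor\frac{m}{2}\right\rfloor$. Then the sum of the elements of the multiset $\sigma_k(J^r_{n,m})$ equals $nk$ if $k<\frac{m}{2}$ or $n$ is even, and equals $(n-1)k$ if $k=\frac{m}{2}$ and $n$ is odd.
   Context: The cycle $C_n$ ($n\ge 3$) has vertex set $\{0,1,\dots,n-1\}$ with $i$ adjacent to $i+1 \bmod n$. For vertices $u,v$, $d(u,v)$ is the geodesic (shortest path) distance. For a set $A=\{a_0<a_1<\dots<a_{m-1}\}$ of vertices and $a_i,a_j\in A$, $\mathrm{span}_A(a_i,a_j)$ is the least positive integer congruent to $j-i$ modulo $m$. For $1\le k\le m-1$, $\sigma_k(A)$ is the multiset $[\,d(u,v): u,v\in A,\ u\ne v,\ \mathrm{span}_A(u,v)=k\,]$ taken over ordered pairs $(u,v)$. For integers $1\le m\le n$ and $0\le r\le n-1$, $J^r_{n,m}=\left\{\left\lfloor\frac{ni+r}{m}\right\rfloor : 0\le i<m\right\}$. *)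

From mathcomp Require Import all_boot.
Set Implicit Arguments. Unset Strict Implicit. Unset Printing Implicit Defensive.

Definition cdist (n u v : nat) : nat :=
  minn ((u + n - v) %% n) ((v + n - u) %% n).

(* J^r_{n,m} = { floor((n i + r)/m) : 0 <= i < m }, as a list (possibly
   with repetitions; it is turned into a set below). *)
Definition Jset (n m r : nat) : seq nat :=
  [seq (n * i + r) %/ m | i <- iota 0 m].

Definition sorted_elems (A : seq nat) : seq nat := sort leq (undup A).

(* span of (a_i, a_j) in a set of size m: the least positive integer
   congruent to j - i modulo m (for i, j < m). *)
Definition span_idx (m i j : nat) : nat :=
  let s := (j + m - i) %% m in if s == 0 then m else s.

(* sigma_k(A) in C_n: the multiset (as a list) of d(u,v) over ordered pairs
   u != v of elements of A with span_A(u,v) = k. *)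
Definition sigma (n k : nat) (A : seq nat) : seq nat :=
  let s := sorted_elems A in
  let m := size s in
  [seq cdist n (nth 0 s ij.1) (nth 0 s ij.2)
  | ij <- [seq (i, j) | i <- iota 0 m, j <- iota 0 m]
  & (ij.1 != ij.2) && (span_idx m ij.1 ij.2 == k)].

(* Write b(x) = floor((n x + r)/m), so that J^r_{n,m} = {b(0) < ... < b(m-1)}
   (strict since m <= n) and b(x + m) = b(x) + n.  A pair of span k is
   (b(i), b((i + k) mod m)), at cycle distance min(g_i, n - g_i) for the gap
   g_i = b(i + k) - b(i).  The gaps telescope to k n, and |m g_i - n k| < m
   forces 2 g_i <= n when 2k < m or n is even, while for m = 2k and n odd
   every g_i is (n - 1)/2 or (n + 1)/2, so every distance is (n - 1)/2. *)

From mathcomp Require Import all_boot.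
From mathcomp Require Import zify.

Lemma cdist_add_mod n u d : u < n -> 0 < d < n ->
  cdist n u ((u + d) %% n) = minn (n - d) d.
Proof.
move=> un /andP[d0 dn]; rewrite /cdist.
case: (ltnP (u + d) n) => ud.
  rewrite (modn_small ud).
  have -> : u + n - (u + d) = n - d by lia.
  have -> : u + d + n - u = d + n by lia.
  by rewrite modnDr !modn_small //; lia.
have -> : (u + d) %% n = u + d - n.
  by rewrite -[in LHS](subnK ud) modnDr modn_small //; lia.
have -> : u + n - (u + d - n) = (n - d) + n by lia.
have -> : u + d - n + n - u = d by lia.
by rewrite modnDr !modn_small //; lia.
Qed.

Lemma span_idx_eq m i j k : i < m -> j < m -> 0 < k < m ->
  (i != j) && (span_idx m i j == k) = (j == (i + k) %% m).
Proof.
move=> im jm /andP[k0 km]; rewrite /span_idx.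
have -> : (i + k) %% m = if i + k < m then i + k else i + k - m.
  case: ltnP => h; first by rewrite modn_small.
  by rewrite -[in LHS](subnK h) modnDr modn_small //; lia.
have -> : (j + m - i) %% m = if i <= j then j - i else j + m - i.
  case: leqP => h; last by rewrite modn_small //; lia.
  by rewrite (_ : j + m - i = j - i + m) ?modnDr ?modn_small //; lia.
case: (leqP i j) => h1; case: (ltnP (i + k) m) => h2;
  case: ifP => /eqP h3; apply/idP/idP => [/andP[/eqP a /eqP b]|/eqP c];
  try (apply/eqP; lia); try (apply/andP; split; apply/eqP; lia).
Qed.

Section JsetPoints.

Variables n m r : nat.
Hypothesis m_gt0 : 0 < m.

Definition jpt x := (n * x + r) %/ m.

Lemma jptD_mul x q : jpt (x + q * m) = jpt x + q * n.
Proof.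
rewrite /jpt (_ : n * (x + q * m) + r = q * n * m + (n * x + r)); last by lia.
by rewrite divnMDl // addnC.
Qed.

Lemma jptDm x : jpt (x + m) = jpt x + n.
Proof. by have := jptD_mul x 1; rewrite !mul1n. Qed.

Lemma jpt_bounds x : m * jpt x <= n * x + r < m * jpt x + m.
Proof. by rewrite /jpt {2 3}(divn_eq (n * x + r) m) mulnC ltn_add2l ltn_pmod ?leq_addr. Qed.

Lemma leq_jpt : {homo jpt : x y / x <= y}.
Proof. by move=> x y xy; rewrite leq_div2r // leq_add2r leq_mul2l xy orbT. Qed.

Lemma jpt_lt_n x : r < n -> x < m -> jpt x < n.
Proof. by move=> rn xm; rewrite /jpt ltn_divLR //; nia. Qed.

Lemma jpt_modm x : r < n -> jpt (x %% m) = jpt x %% n.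
Proof.
move=> rn; rewrite {2}(divn_eq x m) addnC jptD_mul addnC modnMDl.
by rewrite (modn_small (jpt_lt_n _ rn (ltn_pmod x m_gt0))).
Qed.

Lemma sum_jpt_shift k : \sum_(i < m) jpt (i + k) = \sum_(i < m) jpt i + k * n.
Proof.
elim: k => [|k IH]; first by rewrite addn0; apply: eq_bigr => i _; rewrite addn0.
apply: (@addIn (jpt k)).
have shiftS : \sum_(i < m) jpt (i + k.+1) + jpt k = \sum_(i < m.+1) jpt (i + k).
  rewrite big_ord_recl addnC; congr (_ + _).
  by apply: eq_bigr => i _; rewrite /= /bump add1n addSnnS.
rewrite shiftS big_ord_recr /= IH (addnC m) jptDm mulSn.
by move: (\sum_(i < m) _) => S; lia.
Qed.

Variable k : nat.

Definition gap i := jpt (i + k) - jpt i.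

Lemma sum_gap : \sum_(i < m) gap i = k * n.
Proof.
rewrite sumnB => [|i _]; last by rewrite leq_jpt ?leq_addr.
by rewrite sum_jpt_shift addKn.
Qed.

Lemma gap_bounds i : n * k < m * gap i + m /\ m * gap i < n * k + m.
Proof.
have := jpt_bounds i; have := jpt_bounds (i + k).
have : m * jpt i <= m * jpt (i + k) by rewrite leq_mul2l leq_jpt ?leq_addr ?orbT.
rewrite /gap mulnBr mulnDr.
move: (m * jpt i) (m * jpt (i + k)) (n * i) (n * k) => U V NI NK; lia.
Qed.

Lemma double_gap_half i : 2 * k = m -> n.-1 <= 2 * gap i <= n.+1.
Proof.
move=> km; have k_gt0 : 0 < k by lia.
have [lb ub] := gap_bounds i; rewrite -km in lb ub.
have : k * n < k * (2 * gap i + 2) by nia.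
have : k * (2 * gap i) < k * (n + 2) by nia.
by rewrite !ltn_pmul2l //; lia.
Qed.

Hypothesis le_mn : m <= n.

Lemma ltn_jpt : {homo jpt : x y / x < y}.
Proof.
apply: homo_ltn => [y x z|x]; first exact: ltn_trans.
have le_step : 1 * m + (n * x + r) <= n * x.+1 + r by rewrite mul1n mulnS; lia.
by have := leq_div2r m le_step; rewrite divnMDl // add1n.
Qed.

Lemma sorted_elems_Jset : sorted_elems (Jset n m r) = [seq jpt i | i <- iota 0 m].
Proof.
have : sorted ltn [seq jpt i | i <- iota 0 m].
  exact: homo_sorted ltn_jpt _ (iota_ltn_sorted 0 m).
rewrite ltn_sorted_uniq_leq => /andP[uniqJ sortedJ].
by rewrite /sorted_elems undup_id // sorted_sort //; apply: leq_trans.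
Qed.

Lemma double_gap_le i : 2 * k < m -> 2 * gap i <= n.
Proof.
move=> km; have [_ ub] := gap_bounds i.
have : n * (2 * k).+1 <= n * m by rewrite leq_mul2l km orbT.
have : m * (2 * gap i) < m * n.+1 by nia.
by rewrite ltn_pmul2l.
Qed.

Hypothesis lt_km : k < m.

Lemma gap_lt_n i : gap i < n.
Proof.
have : jpt (i + k) < jpt i + n by rewrite -jptDm ltn_jpt ?ltn_add2l.
by rewrite /gap; lia.
Qed.

Hypothesis k_gt0 : 0 < k.

Lemma gap_gt0 i : 0 < gap i.
Proof. by rewrite subn_gt0 ltn_jpt // -{1}[i]addn0 ltn_add2l. Qed.

Lemma cdist_jpt_span i : r < n -> i < m ->
  cdist n (jpt i) (jpt ((i + k) %% m)) = minn (n - gap i) (gap i).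
Proof.
move=> rn im; rewrite -(@cdist_add_mod n (jpt i) (gap i)) ?jpt_lt_n ?gap_gt0 ?gap_lt_n //.
by rewrite jpt_modm // /gap subnKC // leq_jpt ?leq_addr.
Qed.

Lemma sumn_sigma_Jset :
  sumn (sigma n k (Jset n m r)) = \sum_(i < m) cdist n (jpt i) (jpt ((i + k) %% m)).
Proof.
rewrite /sigma sorted_elems_Jset size_map size_iota sumnE big_map big_filter.
have iotaE : iota 0 m = index_iota 0 m by rewrite /index_iota subn0.
rewrite big_mkcond big_allpairs /= iotaE big_mkord.
apply: eq_bigr => i _; rewrite big_mkord -big_mkcond /=.
have jm : (i + k) %% m < m by rewrite ltn_pmod.
rewrite (big_pred1 (Ordinal jm)) => [|j]; last by rewrite /= span_idx_eq ?k_gt0.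
by rewrite -iotaE !(nth_map 0) ?size_iota ?nth_iota.
Qed.

End JsetPoints.

Theorem mainTheorem2 (k m n r : nat) :
  3 <= n -> 2 <= m -> m <= n -> r <= n - 1 -> 1 <= k -> k <= m./2 ->
  ((2 * k < m \/ ~~ odd n) -> sumn (sigma n k (Jset n m r)) = n * k) /\
  (2 * k = m -> odd n -> sumn (sigma n k (Jset n m r)) = (n - 1) * k).
Proof.
move=> _ m2 mn rn k1 km.
have m0 : 0 < m by lia.
have rn' : r < n by lia.
have k2 : 2 * k <= m by have := odd_double_half m; rewrite -muln2; lia.
have km' : k < m by lia.
have parity := odd_double_half n; rewrite -muln2 in parity.
rewrite sumn_sigma_Jset //.
under eq_bigr => i _ do rewrite cdist_jpt_span ?ltn_ord //.
split=> [evenH | mk odd_n].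
  rewrite mulnC -(sum_gap n m r) //; apply: eq_bigr => i _; apply/minn_idPr.
  have [lt_km2 | eq_km2] : 2 * k < m \/ 2 * k = m by lia.
    by have := double_gap_le n m r m0 k mn i lt_km2; lia.
  have even_n : odd n = false by case: evenH => [|/negbTE]; first lia.
  by have := double_gap_half n m r m0 k i eq_km2; rewrite even_n in parity; lia.
rewrite (eq_bigr (fun _ => n./2)) => [|i _]; first by rewrite sum_nat_const card_ord; lia.
by have := double_gap_half n m r m0 k i mk; rewrite odd_n in parity; lia.
Qed.
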